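(* Let $T$ be a $\pi$-increasing tree with maximum vertex $v$. If $T$ is irreducible, then the $v$-dependence graph $G_v(T)$ is a tree rooted at $\pi^v$ with all edges directed towards the root (i.e., $\pi^v$ has outdegree $0$ and every other vertex has outdegree exactly $1$, and the underlying graph is a tree).
   Context: Standing assumptions: $r\ge2$ and $\pi$ is a set partition of $\{1,\dots,r\}$ having $\{1\}$ as a block; its blocks are $\pi_1,\dots,\pi_k$ with maxima $\mu_i=\max\pi_i$; $\pi^x$ denotes the block containing $x$. A set $\mathcal{S}$ is $\pi$-compatible if it is a union of blocks of $\pi$. An unordered increasing tree is a rooted tree on distinct positive integers, sons unordered, each son larger than its father. A $\pi$-increasing tree is an unordered increasing tree $T$ whose vertex-set is $\pi$-compatible and such that for any two elements $i<j$ of a same block of $\pi$ contained in $V(T)$, $i$ is an ancestor of $j$ in $T$. $v$-decomposition: for a vertex $v$ of $T$ with chain $a_1<\dots<a_\ell=v$ from the root to $v$, removing the chain edges leaves components $T^{(a_j)}$ rooted at $a_j$. $v$-dependence graph $G_v(T)$ of a $\pi$-increasing tree $T$: a directed graph whose vertices are the blocks of $\pi$ contained in $V(T)$; for each such block $\pi_i$ whose maximum $\mu_i$ is not on the chain $a_1,\dots,a_\ell$, $\mu_i$ is a non-root vertex of a unique $T^{(a_j)}$, and there is a directed edge (possibly a loop) from $\pi_i$ to $\pi^{a_j}$; there are no other edges. A $\pi$-increasing tree $T$ with maximum vertex $M$ is irreducible if $G_M(T)$ is connected (ignoring edge directions), and reducible otherwise. *)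

(* Vertices are elements of 'I_r.+1; the ground set {1,...,r}
   is [set i | 0 < i]. *)
From Stdlib Require Import Relations.Relation_Operators.
From mathcomp Require Import all_boot.

Set Implicit Arguments.
Unset Strict Implicit.
Unset Printing Implicit Defensive.

Section PiTrees.
Variable r : nat.
Local Notation T := 'I_r.+1.

Definition pi_partition (P : {set {set T}}) : bool :=
  partition P [set i : T | 0 < i] && ([set (inord 1 : T)] \in P).

Definition pi_compatible (P : {set {set T}}) (S : {set T}) : Prop :=
  S = \bigcup_(B in P | B \subset S) B.

Definition is_max_in (S : {set T}) (m : T) : Prop :=
  m \in S /\ forall y, y \in S -> y <= m.

(* An unordered increasing rooted tree with vertex set V and root rt, given
   by its father map par (only relevant on V \ {rt}): every non-root vertex
   has its father in V, and the father is smaller than the son. *)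
Definition incr_tree (V : {set T}) (rt : T) (par : T -> T) : Prop :=
  rt \in V /\ (forall x, x \in V -> x != rt -> par x \in V /\ par x < x).

Inductive ancestor (V : {set T}) (rt : T) (par : T -> T) : T -> T -> Prop :=
  | anc_refl x : ancestor V rt par x x
  | anc_step a x : x \in V -> x != rt -> ancestor V rt par a (par x) ->
                   ancestor V rt par a x.

Definition pi_inc_tree (P : {set {set T}}) (V : {set T}) (rt : T)
    (par : T -> T) : Prop :=
  [/\ incr_tree V rt par, pi_compatible P V &
      forall B, B \in P -> B \subset V ->
        forall i j, i \in B -> j \in B -> i < j -> ancestor V rt par i j].

Definition on_chain (V : {set T}) (rt : T) (par : T -> T) (v a : T) : Prop :=
  a \in V /\ ancestor V rt par a v.

(* in_comp a x : x is a vertex of the component T^(a) of the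
   v-decomposition (a on the chain): going up from x one reaches a
   without using any chain edge, i.e. without meeting the chain before a. *)
Inductive in_comp (V : {set T}) (rt : T) (par : T -> T) (v : T) : T -> T -> Prop :=
  | comp_here a : on_chain V rt par v a -> in_comp V rt par v a a
  | comp_up a x : x \in V -> x != rt -> ~ on_chain V rt par v x ->
                  in_comp V rt par v a (par x) -> in_comp V rt par v a x.

Definition dep_vertex (P : {set {set T}}) (V : {set T}) (B : {set T}) : bool :=
  (B \in P) && (B \subset V).

(* the edges of the v-dependence graph G_v(T): for each vertex B whose
   maximum m is not on the chain, exactly one edge B -> pi^{a_j}, where
   T^(a_j) is the component containing m. *)
Definition dep_edge (P : {set {set T}}) (V : {set T}) (rt : T) (par : T -> T) (v : T) (B C : {set T}) : Prop :=
  dep_vertex P V B /\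
  exists m a, [/\ is_max_in B m, ~ on_chain V rt par v m,
                  in_comp V rt par v a m & C = pblock P a].

Definition connected_on (Vb : {set T} -> bool)
    (E : {set T} -> {set T} -> Prop) : Prop :=
  forall B C, Vb B -> Vb C -> clos_refl_sym_trans _ E B C.

(* the underlying undirected multigraph (one edge per pair (B,C) with E B C)
   contains a cycle: distinct edges e_0..e_{k-1} (k >= 1) and distinct
   vertices x_0..x_{k-1} with e_i joining x_i and x_{i+1 mod k}.
   (k = 1: a loop; k = 2: two edges between the same pair.) *)
Definition has_cycle (E : {set T} -> {set T} -> Prop) : Prop :=
  exists (xs : seq {set T}) (es : seq ({set T} * {set T})),
    [/\ 0 < size es, size xs = size es, uniq xs, uniq es &
        forall i, i < size es ->
          let e := nth (set0, set0) es i in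
          E e.1 e.2 /\
          ((e.1 = nth set0 xs i /\ e.2 = nth set0 xs (i.+1 %% size es)) \/
           (e.2 = nth set0 xs i /\ e.1 = nth set0 xs (i.+1 %% size es)))].

Definition is_tree_graph (Vb : {set T} -> bool)
    (E : {set T} -> {set T} -> Prop) : Prop :=
  connected_on Vb E /\ ~ has_cycle E.

Definition irreducible (P : {set {set T}}) (V : {set T}) (rt : T) (par : T -> T) : Prop :=
  forall M, is_max_in V M -> connected_on (dep_vertex P V) (dep_edge P V rt par M).

End PiTrees.

(* Components of the v-decomposition are disjoint and a block has a single
   maximum, so every block has at most one outgoing edge in G_v(T); the block
   of v has none, since its maximum v is on the chain.  In a graph where every
   vertex has at most one out-edge, "the sink is reachable by forward edges"
   is invariant along edges taken in either direction, so connectedness makes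
   every block reach the block of v; in particular every other block has an
   out-edge.  The number of forward steps to the sink then drops by one along
   each edge, and a cycle cannot pass through a vertex of maximal depth. *)
From Stdlib Require Import Relations.Relation_Operators ClassicalEpsilon.
From mathcomp Require Import all_boot.

Set Implicit Arguments.
Unset Strict Implicit.
Unset Printing Implicit Defensive.

Section FunctionalGraph.
Variables (X : Type) (E : X -> X -> Prop) (x0 : X).
Hypothesis E_functional : forall a b c, E a b -> E a c -> b = c.
Hypothesis x0_sink : forall c, ~ E x0 c.

Fixpoint reaches_in (n : nat) (a : X) : Prop :=
  if n is n'.+1 then exists2 b, E a b & reaches_in n' b else a = x0.

Definition reaches (a : X) : Prop := exists n, reaches_in n a.

Lemma reaches_in_uniq n m a : reaches_in n a -> reaches_in m a -> n = m.
Proof.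
elim: n m a => [|n IHn] [|m] a //=.
- by move=> -> [b /x0_sink].
- by move=> [b Eab _] a0; move: Eab; rewrite a0 => /x0_sink.
- move=> [b Eab Rb] [c Eac Rc].
  by move: Rc; rewrite -(E_functional Eab Eac) => /(IHn m b) ->.
Qed.

Lemma reaches_edge a b : E a b -> reaches a <-> reaches b.
Proof.
move=> Eab; split=> [[[|n] /=] | [n Rb]]; last by exists n.+1; exists b.
- by move=> a0; move: Eab; rewrite a0 => /x0_sink.
- by move=> [c Eac Rc]; exists n; rewrite (E_functional Eab Eac).
Qed.

Lemma reaches_crst a b : clos_refl_sym_trans _ E a b -> reaches a <-> reaches b.
Proof.
elim=> [x y /reaches_edge // | // | x y _ [] | x y z _ [] ? ? _ [] ? ?].
- by split.
- by split; auto.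
Qed.

Lemma height_of_reaches :
  (forall a b, E a b -> reaches a) ->
  exists d : X -> nat, forall a b, E a b -> d a = (d b).+1.
Proof.
move=> reach_src.
pose d a := epsilon (inhabits 0) (fun n => reaches_in n a).
exists d => a b Eab.
have Ra := reach_src _ _ Eab.
have Rb : reaches b by apply/(reaches_edge Eab).
apply: (reaches_in_uniq (epsilon_spec _ _ Ra)).
by exists b => //; exact: (epsilon_spec (inhabits 0) _ Rb).
Qed.

End FunctionalGraph.

(* Along a cycle, an edge at a vertex x of maximal height must point away
   from x; the two cycle edges at x then share their source, hence their
   target, hence coincide, so the cycle is a loop at x: impossible. *)
Lemma no_cycle_of_height r (E : {set 'I_r.+1} -> {set 'I_r.+1} -> Prop)
    (d : {set 'I_r.+1} -> nat) :
  (forall a b c, E a b -> E a c -> b = c) ->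
  (forall a b, E a b -> d a = (d b).+1) -> ~ has_cycle E.
Proof.
move=> Efun dE [xs [es [k_gt0 _ _ uniq_es cyc]]].
set k := size es in k_gt0 cyc uniq_es *.
pose x i := nth set0 xs i; pose e i := nth (set0, set0) es i.
have [j _ jmax] :=
  @arg_maxnP _ (Ordinal k_gt0) xpredT (fun i : 'I_k => d (x i)) isT.
have no_edge_into_top i : i < k -> ~ E (x i) (x j).
  move=> ik /dE dxi.
  by have := jmax (Ordinal ik) isT; rewrite /= dxi ltnn.
have [Ej ej] := cyc j (ltn_ord j).
have {ej} [ej1 ej2] : (e j).1 = x j /\ (e j).2 = x (j.+1 %% k).
  case: ej => [// | [ej2 ej1]]; exfalso; move: Ej; rewrite ej1 ej2.
  by apply: no_edge_into_top; rewrite ltn_pmod.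
pose p := (j + k.-1) %% k.
have pk : p < k by rewrite ltn_pmod.
have pj : p.+1 %% k = j.
  by rewrite /p -addn1 modnDml -addnA addn1 prednK // modnDr modn_small.
have [Ep ep] := cyc p pk.
have ep1 : (e p).1 = x j.
  case: ep => [[ep1 ep2] | [_ ->]]; last by rewrite pj.
  by move: Ep; rewrite ep1 ep2 pj => /(no_edge_into_top _ pk).
have epj : e p = e j.
  apply: injective_projections; first by rewrite ep1 ej1.
  by apply: (Efun _ _ _ Ep); rewrite ep1 -ej1.
have pjE : p = j.
  by apply/eqP; rewrite -(nth_uniq (set0, set0) pk (ltn_ord j) uniq_es); apply/eqP.
move: Ej; rewrite ej1 ej2 -{2}pjE pj.
exact: no_edge_into_top (ltn_ord j).
Qed.

Section DependenceGraph.
Variables (r : nat) (P : {set {set 'I_r.+1}}) (V : {set 'I_r.+1}).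
Variables (rt : 'I_r.+1) (par : 'I_r.+1 -> 'I_r.+1) (v : 'I_r.+1).

Lemma in_comp_uniq a a' x :
  in_comp V rt par v a x -> in_comp V rt par v a' x -> a = a'.
Proof.
move=> H; elim: H a' => [a0 a0_chain | a0 x0 _ _ off_x0 _ IH] a' H'.
- by inversion H'; subst.
- by inversion H'; subst; [case: off_x0 | apply: IH].
Qed.

Lemma is_max_in_uniq (B : {set 'I_r.+1}) m m' :
  is_max_in B m -> is_max_in B m' -> m = m'.
Proof.
move=> [mB mmax] [m'B m'max]; apply/val_inj/eqP.
by rewrite eqn_leq mmax // m'max.
Qed.

Lemma dep_edge_functional (B C C' : {set 'I_r.+1}) :
  dep_edge P V rt par v B C -> dep_edge P V rt par v B C' -> C = C'.
Proof.
move=> [_ [m [a [mmax _ ma ->]]]] [_ [m' [a' [m'max _ m'a' ->]]]].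
move: m'a'; rewrite -(is_max_in_uniq mmax m'max) => m'a'.
by rewrite (in_comp_uniq ma m'a').
Qed.

Lemma dep_edge_max_block_sink (B C : {set 'I_r.+1}) :
  is_max_in V v -> v \in B -> ~ dep_edge P V rt par v B C.
Proof.
move=> [_ vmax] vB [/andP [_ BV] [m [a [[mB mmax] off_m _ _]]]].
have mv : m = v.
  by apply/val_inj/eqP; rewrite eqn_leq mmax // vmax // (subsetP BV).
by apply: off_m; rewrite mv; split; [apply: (subsetP BV) | constructor].
Qed.

Lemma compatible_pblock x :
  pi_compatible P V -> trivIset P -> x \in V ->
  [/\ dep_vertex P V (pblock P x) & x \in pblock P x].
Proof.
move=> Vcomp trivP; rewrite {1}Vcomp => /bigcupP [B /andP [BP BV] xB].
by rewrite (def_pblock trivP BP xB) /dep_vertex BP BV.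
Qed.

End DependenceGraph.

Theorem lemma3p4 (r : nat) (P : {set {set 'I_r.+1}}) (V : {set 'I_r.+1})
    (rt : 'I_r.+1) (par : 'I_r.+1 -> 'I_r.+1) (v : 'I_r.+1) :
  2 <= r -> pi_partition P -> pi_inc_tree P V rt par -> is_max_in V v ->
  irreducible P V rt par ->
  [/\ is_tree_graph (dep_vertex P V) (dep_edge P V rt par v),
      (forall C, ~ dep_edge P V rt par v (pblock P v) C) &
      (forall B, dep_vertex P V B -> B != pblock P v ->
         exists! C, dep_edge P V rt par v B C)].
Proof.
move=> _ /andP [/and3P [_ trivP _] _] [_ Vcomp _] vmax irr.
set E := dep_edge P V rt par v; set B0 := pblock P v.
have [dB0 vB0] := compatible_pblock Vcomp trivP vmax.1.
have Efun : forall a b c, E a b -> E a c -> b = c.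
  by move=> a b c; apply: dep_edge_functional.
have B0sink : forall C, ~ E B0 C by move=> C; apply: dep_edge_max_block_sink vmax vB0.
have Gconn := irr v vmax.
have reachB0 : forall B, dep_vertex P V B -> reaches E B0 B.
  move=> B dB; apply/(reaches_crst Efun B0sink (Gconn _ _ dB dB0)).
  by exists 0.
have [d dE] := height_of_reaches Efun B0sink (fun a b Eab => reachB0 a Eab.1).
split=> //; first by split=> //; apply: no_cycle_of_height Efun dE.
move=> B dB BB0; have [[|n] /= Rn] := reachB0 B dB.
  by rewrite Rn eqxx in BB0.
case: Rn => C EBC _; exists C; split=> // C'; exact: Efun.
Qed.
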